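(* Consider the IMAB model with $K=2$ arms, $\mathcal{X}_1=\mathcal{X}_2=\{0,1\}$, Bernoulli parameters $p_i=p_i(1)\in[\frac25,\frac12]$ with $p_2<p_1<\frac12$, and let $\Delta=h_b(p_1)-h_b(p_2)$. Run the generic UCB algorithm with the plug-in estimator $\hat H(\boldsymbol Y,n)=h_b(\hat p(\boldsymbol Y,n))$, the upper confidence deviation $\mathrm{UCD}(\boldsymbol Y,\delta,n)=\mathrm{UCD}^{(1/2)}_{\mathrm{ber}}(\hat p(\boldsymbol Y,n),\delta,n)$, and $\delta_\alpha(t)=4t^{-\alpha}$ with $\alpha>2$. Then for every $t\ge 2$, \[ R(t)\leq \frac{784(\frac12-p_2)^2\alpha\log t}{\Delta}+60\alpha\log t+\frac{8(\alpha-1)}{\alpha-2}\Delta. \]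
   Context: IMAB model: there are $K\ge2$ arms; arm $i$ emits i.i.d. symbols from an unknown PMF $p_i$ on a finite alphabet $\mathcal{X}_i$, independently across rounds and arms. $H_i:=H(p_i)$ (natural log), $i^*\in\arg\max_i H_i$, $\Delta_i:=H_{i^*}-H_i$. Generic UCB algorithm: given an estimator $\hat H(\boldsymbol Y,n)$, an upper confidence deviation $\mathrm{UCD}(\boldsymbol Y,\delta,n)$ and a confidence function $\delta_\alpha(t)$, at each round $t=1,2,\ldots$ the player plays $I(t)\in\arg\max_{i\in[K]}\{\hat H(\boldsymbol X_i(t-1),N_i(t-1))+\mathrm{UCD}(\boldsymbol X_i(t-1),\delta_\alpha(t),N_i(t-1))\}$ (ties broken arbitrarily; an arm whose index is undefined, e.g. with $N_i(t-1)=0$, is treated as having index $+\infty$), where $\boldsymbol X_i(t-1)$ is the tuple of symbols observed from arm $i$ before round $t$ and $N_i(t-1)$ its length; it then observes a fresh symbol from $p_{I(t)}$, appended to $\boldsymbol X_{I(t)}$. $N_i(t)$ is the number of plays of arm $i$ in rounds $1,\ldots,t$. Pseudo-regret: $R(t):=\sum_{i:\Delta_i>0}\mathbb{E}[N_i(t)]\Delta_i$. $h_b(p):=-p\log p-(1-p)\log(1-p)$; $\hat p(\boldsymbol Y,n)$ is the empirical frequency of $1$ in $\boldsymbol Y$. $\mathrm{UCD}^{(1/2)}_{\mathrm{ber}}(q,\delta,n):=7|\frac12-q|\sqrt{\log(4/\delta)/n}+9\log(4/\delta)/n$. *)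

From Stdlib Require Import Reals List.
Import ListNotations.
Open Scope R_scope.

Inductive arm := A1 | A2.

Definition arm_eqb (a b : arm) : bool :=
  match a, b with A1, A1 | A2, A2 => true | _, _ => false end.

Definition other (a : arm) : arm := match a with A1 => A2 | A2 => A1 end.

(* A history: the sequence of (played arm, observed symbol) in rounds
   1, 2, ...; the symbol [true] stands for 1 and [false] for 0. *)
Definition history := list (arm * bool).

(* binary entropy in nats (with 0 log 0 = 0, since Stdlib's ln 0 = 0) *)
Definition hb (p : R) : R := - p * ln p - (1 - p) * ln (1 - p).

Definition count_plays (a : arm) (h : history) : nat :=
  length (filter (fun x => arm_eqb (fst x) a) h).

Definition count_ones (a : arm) (h : history) : nat :=
  length (filter (fun x => arm_eqb (fst x) a && snd x)%bool h).

Definition phat (a : arm) (h : history) : R :=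
  INR (count_ones a h) / INR (count_plays a h).

Definition ucd_ber_half (q delta : R) (n : nat) : R :=
  7 * Rabs (1/2 - q) * sqrt (ln (4 / delta) / INR n) + 9 * ln (4 / delta) / INR n.

Definition delta_alpha (alpha : R) (t : nat) : R := 4 * Rpower (INR t) (- alpha).

(* UCB index of arm a at round t = length h + 1 (meaningful when N_a > 0):
   plug-in estimate h_b(phat) plus UCD^{(1/2)}_ber(phat, delta_alpha(t), N_a). *)
Definition ucb_index (alpha : R) (a : arm) (h : history) : R :=
  hb (phat a h)
  + ucd_ber_half (phat a h) (delta_alpha alpha (S (length h))) (count_plays a h).

(* [a] is an admissible choice of the generic UCB algorithm after history h:
   a maximizes the index, where an arm with no observations has index +oo. *)
Definition is_ucb_choice (alpha : R) (h : history) (a : arm) : Prop :=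
  count_plays a h = 0%nat \/
  (count_plays (other a) h <> 0%nat /\
   ucb_index alpha (other a) h <= ucb_index alpha a h).

Definition param (p1 p2 : R) (a : arm) : R := match a with A1 => p1 | A2 => p2 end.

(* Expected number of plays of arm i in the next r rounds, starting from
   history h, when the player follows the selection rule [sel] and each play
   of arm a yields a fresh symbol 1 with probability pa a, 0 otherwise. *)
Fixpoint exp_plays (pa : arm -> R) (sel : history -> arm) (i : arm)
    (h : history) (r : nat) : R :=
  match r with
  | O => 0
  | S r' =>
      let a := sel h in
      (if arm_eqb a i then 1 else 0)
      + pa a * exp_plays pa sel i (h ++ [(a, true)]) r'
      + (1 - pa a) * exp_plays pa sel i (h ++ [(a, false)]) r'
  end.

Definition expected_N (pa : arm -> R) (sel : history -> arm) (i : arm) (t : nat) : R :=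
  exp_plays pa sel i [] t.

Definition entropy (pa : arm -> R) (i : arm) : R := hb (pa i).
Definition gap (pa : arm -> R) (i : arm) : R :=
  Rmax (entropy pa A1) (entropy pa A2) - entropy pa i.

Definition regret (pa : arm -> R) (sel : history -> arm) (t : nat) : R :=
  (if Rlt_dec 0 (gap pa A1) then expected_N pa sel A1 t * gap pa A1 else 0)
  + (if Rlt_dec 0 (gap pa A2) then expected_N pa sel A2 t * gap pa A2 else 0).

(* The regret is [Delta] times the expected number of plays of the worse arm 2.  Draw the
   rewards of each arm in advance as an i.i.d. Bernoulli table.  Beyond its first [u] plays,
   arm 2 is only played in rounds where the index of arm 1 falls below [hb p1] or the index of
   arm 2, computed from [n >= u] samples, reaches [hb p1].  Two estimates on the binary
   entropy, optimism [hb p <= hb q + UCD] and, once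
   [u >= 784 (1/2 - p2)^2 alpha log t / Delta^2 + 60 alpha log t / Delta],
   [hb q + UCD < hb p2 + Delta], turn both events into a deviation
   [|q - p| >= sqrt (alpha log s / n)] of an empirical frequency, which has probability at
   most [2 s^-alpha] by a Chernoff bound.  Summing over [n < s] and over the rounds [s <= t]
   gives [E N_2(t) <= u + 4 sum_s (s - 1) s^-alpha <= u + 4 / (alpha - 2)]. *)

From Stdlib Require Import Reals Lra Lia Psatz List ZArith.
From Coquelicot Require Import Coquelicot.
Import ListNotations.
Open Scope R_scope.

(** * Binary entropy *)

Definition hb_deriv (q : R) : R := ln (1 - q) - ln q.

Lemma derivable_pt_lim_hb x : 0 < x < 1 -> derivable_pt_lim hb x (hb_deriv x).
Proof.
  intros Hx. apply is_derive_Reals. unfold hb, hb_deriv.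
  auto_derive.
  - repeat split; lra.
  - replace (1 + - x) with (1 - x) by ring. field. lra.
Qed.

Lemma hb_mvt a b : 0 < a < b -> b < 1 ->
  exists c, a < c < b /\ hb b - hb a = hb_deriv c * (b - a).
Proof.
  intros Hab Hb.
  destruct (MVT_cor2 hb hb_deriv a b) as [c [Hc Hac]]; [lra| |eauto].
  intros c Hc. apply derivable_pt_lim_hb. lra.
Qed.

Lemma hb_1_minus q : hb (1 - q) = hb q.
Proof. unfold hb. replace (1 - (1 - q)) with q by ring. ring. Qed.

Lemma hb_deriv_antitone a b : 0 < a -> a <= b -> b < 1 -> hb_deriv b <= hb_deriv a.
Proof.
  intros Ha Hab Hb. unfold hb_deriv.
  assert (ln (1 - b) <= ln (1 - a)) by (apply ln_le; lra).
  assert (ln a <= ln b) by (apply ln_le; lra).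
  lra.
Qed.

Lemma hb_deriv_pos q : 0 < q < 1/2 -> 0 < hb_deriv q.
Proof.
  intros Hq. unfold hb_deriv.
  assert (ln q < ln (1 - q)) by (apply ln_increasing; lra). lra.
Qed.

Lemma hb_deriv_nonneg q : 0 < q <= 1/2 -> 0 <= hb_deriv q.
Proof.
  intros Hq. unfold hb_deriv.
  assert (ln q <= ln (1 - q)) by (apply ln_le; lra). lra.
Qed.

(* Stdlib's [ln] is [0] on nonpositive arguments, so [hb 0 = hb 1 = 0]. *)
Lemma ln_nonpos x : 0 <= x <= 1 -> ln x <= 0.
Proof.
  intros Hx. destruct (Req_dec x 0) as [->|Hx0].
  - unfold ln. destruct (Rlt_dec 0 0); [exfalso|]; lra.
  - rewrite <- ln_1. apply ln_le; lra.
Qed.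

Lemma hb_nonneg q : 0 <= q <= 1 -> 0 <= hb q.
Proof.
  intros Hq. unfold hb.
  pose proof (ln_nonpos q Hq). pose proof (ln_nonpos (1 - q) ltac:(lra)). nra.
Qed.

Lemma hb_sub_le_deriv a b : 0 < a <= b -> b <= 1/2 -> hb b - hb a <= hb_deriv a * (b - a).
Proof.
  intros Hab Hb. destruct (Req_dec a b) as [->|Hne]; [lra|].
  destruct (hb_mvt a b) as [c [Hc ->]]; try lra.
  pose proof (hb_deriv_antitone a c). pose proof (hb_deriv_nonneg c). nra.
Qed.

Lemma hb_lt_compat a b : 0 < a < b -> b <= 1/2 -> hb a < hb b.
Proof.
  intros Hab Hb. destruct (hb_mvt a b) as [c [Hc Hdiff]]; try lra.
  pose proof (hb_deriv_pos c). nra.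
Qed.

Lemma hb_le_compat a b : 0 <= a <= b -> b <= 1/2 -> hb a <= hb b.
Proof.
  intros Hab Hb. destruct (Req_dec a b) as [->|Hne]; [lra|].
  destruct (Req_dec a 0) as [->|Ha0].
  - replace (hb 0) with 0 by (unfold hb; rewrite Rminus_0_r, ln_1; ring).
    apply hb_nonneg. lra.
  - apply Rlt_le, hb_lt_compat; lra.
Qed.

Lemma hb_le_ln2 q : 0 <= q <= 1 -> hb q <= ln 2.
Proof.
  intros Hq.
  replace (ln 2) with (hb (1/2)).
  - destruct (Rle_dec q (1/2)).
    + apply hb_le_compat; lra.
    + rewrite <- hb_1_minus. apply hb_le_compat; lra.
  - unfold hb. replace (1 - 1/2) with (/ 2) by field. replace (1/2) with (/ 2) by field.
    rewrite ln_Rinv by lra. field.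
Qed.

Lemma ln_le_half_sub_inv x : 1 <= x -> ln x <= (x - / x) / 2.
Proof.
  intros Hx. destruct (Req_dec x 1) as [->|Hx1].
  - rewrite ln_1, Rinv_1. lra.
  - set (g y := (y - / y) / 2 - ln y).
    destruct (MVT_cor2 g (fun y => (1 + / (y * y)) / 2 - / y) 1 x) as [c [Hc Hc1x]]; [lra| |].
    + intros c Hc. apply is_derive_Reals. unfold g. auto_derive.
      * repeat split; lra.
      * field. lra.
    + unfold g in Hc. rewrite ln_1, Rinv_1 in Hc.
      assert (0 <= (1 + / (c * c)) / 2 - / c).
      { replace ((1 + / (c * c)) / 2 - / c) with ((c - 1) ^ 2 / (2 * (c * c))) by (field; lra).
        apply Rdiv_le_0_compat; nra. }
      nra.
Qed.

Lemma ln2_le : ln 2 <= 3/4.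
Proof. pose proof (ln_le_half_sub_inv 2 ltac:(lra)). lra. Qed.

Lemma hb_deriv_le q : 0 < q <= 1/2 -> hb_deriv q <= (1 - 2 * q) / (2 * q * (1 - q)).
Proof.
  intros Hq. unfold hb_deriv. rewrite <- ln_div by lra.
  eapply Rle_trans; [apply ln_le_half_sub_inv|].
  - apply (Rmult_le_reg_r q); [lra|]. unfold Rdiv. rewrite Rmult_assoc, Rinv_l; lra.
  - right. field. lra.
Qed.

Definition ucb_bonus (q r : R) : R := 7 * Rabs (1/2 - q) * r + 9 * r ^ 2.

Lemma hb_deriv_le_bonus q r : 0 < q <= 1/2 -> 2/5 - r <= q -> 0 <= r -> r ^ 2 <= 1/12 ->
  hb_deriv q <= 7 * (1/2 - q) + 9 * r.
Proof.
  intros Hq Hqr Hr Hr2. destruct (Req_dec q (1/2)) as [->|Hne].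
  - unfold hb_deriv. replace (1 - 1/2) with (1/2) by lra. lra.
  - eapply Rle_trans; [apply hb_deriv_le; lra|].
    (* with [y = 1/2 - q] the bound reads [4 y / (1 - 4 y^2) <= 7 y + 9 r],
       where [y <= 1/10 + r] *)
    assert (Hpoly : forall y, 0 < y <= 1/10 + r -> 4 * y <= (1 - 4 * y * y) * (7 * y + 9 * r)).
    { intros y Hy. assert (r < 29/100) by nra.
      assert (0 < 1 - 4 * y * y) by nra.
      destruct (Rle_dec y (327/1000)).
      - assert (3 * y - 28 * y * y * y >= 0) by nra.
        assert (0 <= 9 * r * (1 - 4 * y * y)) by nra. nra.
      - assert (9 * (y - 1/10) * (1 - 4 * y * y) <= 9 * r * (1 - 4 * y * y)) by nra.
        assert (12 * y - 64 * y * y * y + 36/10 * y * y - 9/10 >= 0) by nra.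
        nra. }
    specialize (Hpoly (1/2 - q) ltac:(lra)).
    apply (Rmult_le_reg_r (2 * q * (1 - q))); [nra|].
    unfold Rdiv. rewrite Rmult_assoc, Rinv_l by nra. nra.
Qed.

Lemma hb_le_add_bonus_low p q r : 2/5 <= p <= 1/2 -> 0 <= q <= 1/2 -> 0 <= r ->
  9 * r ^ 2 < 3/4 -> p - q < r -> hb p <= hb q + (7 * (1/2 - q) * r + 9 * r ^ 2).
Proof.
  intros Hp Hq Hr Hr2 Hpq.
  destruct (Rle_dec p q).
  - assert (hb p <= hb q) by (apply hb_le_compat; lra). nra.
  - assert (r < 29/100) by nra.
    pose proof (hb_sub_le_deriv q p ltac:(lra) ltac:(lra)).
    pose proof (hb_deriv_le_bonus q r ltac:(lra) ltac:(lra) Hr ltac:(lra)).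
    pose proof (hb_deriv_nonneg q ltac:(lra)).
    assert (hb_deriv q * (p - q) <= (7 * (1/2 - q) + 9 * r) * r) by nra.
    nra.
Qed.

Lemma hb_le_add_bonus p q r : 2/5 <= p <= 1/2 -> 0 <= q <= 1 -> 0 <= r ->
  3/4 <= 9 * r ^ 2 \/ Rabs (q - p) < r -> hb p <= hb q + ucb_bonus q r.
Proof.
  intros Hp Hq Hr Hdev. unfold ucb_bonus.
  pose proof (hb_nonneg q Hq). pose proof (Rabs_pos (1/2 - q)).
  assert (0 <= 7 * Rabs (1/2 - q) * r) by (apply Rmult_le_pos; lra).
  destruct (Rle_dec (3/4) (9 * r ^ 2)).
  - pose proof (hb_le_ln2 p ltac:(lra)). pose proof ln2_le. lra.
  - destruct Hdev as [|Hdev]; [lra|]. apply Rabs_def2 in Hdev.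
    destruct (Rle_dec q (1/2)).
    + rewrite Rabs_right by lra. apply hb_le_add_bonus_low; lra.
    + rewrite Rabs_left by lra. rewrite <- (hb_1_minus q).
      replace (- (1/2 - q)) with (1/2 - (1 - q)) by lra.
      destruct (Rle_dec (1 - p) q).
      * apply hb_le_add_bonus_low; lra.
      * assert (hb p <= hb (1 - q)) by (apply hb_le_compat; lra). nra.
Qed.

Lemma hb_deriv_le_linear p : 2/5 <= p <= 1/2 -> hb_deriv p <= 25/6 * (1/2 - p).
Proof.
  intros Hp. eapply Rle_trans; [apply hb_deriv_le; lra|].
  apply (Rmult_le_reg_r (2 * p * (1 - p))); [nra|].
  unfold Rdiv. rewrite Rmult_assoc, Rinv_l by nra.
  assert (0 <= (1/2 - p) * ((p - 2/5) * (3/5 - p))) by (apply Rmult_le_pos; nra).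
  nra.
Qed.

Lemma hb_sub_le_deriv_dist p q r : 2/5 <= p < 1/2 -> 0 <= q <= 1 -> Rabs (q - p) < r ->
  hb q - hb p <= hb_deriv p * r.
Proof.
  intros Hp Hq Hqp. apply Rabs_def2 in Hqp.
  pose proof (hb_deriv_nonneg p ltac:(lra)).
  assert (0 <= hb_deriv p * r) by (apply Rmult_le_pos; lra).
  destruct (Rle_dec q p).
  - assert (hb q <= hb p) by (apply hb_le_compat; lra). lra.
  - destruct (Rle_dec q (1/2)).
    + pose proof (hb_sub_le_deriv p q ltac:(lra) ltac:(lra)). nra.
    + rewrite <- (hb_1_minus q). destruct (Rle_dec (1 - q) p).
      * assert (hb (1 - q) <= hb p) by (apply hb_le_compat; lra). lra.
      * pose proof (hb_sub_le_deriv p (1 - q) ltac:(lra) ltac:(lra)). nra.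
Qed.

Lemma hb_add_bonus_lt p D r q : 2/5 <= p < 1/2 -> 0 < D -> 0 <= r ->
  (1/2 - p) * r <= D / 28 -> r ^ 2 <= D / 60 -> 0 <= q <= 1 -> Rabs (q - p) < r ->
  hb q + ucb_bonus q r < hb p + D.
Proof.
  intros Hp HD Hr Hr28 Hr60 Hq Hqp. unfold ucb_bonus.
  pose proof (hb_sub_le_deriv_dist p q r Hp Hq Hqp).
  pose proof (hb_deriv_le_linear p ltac:(lra)).
  assert (Rabs (1/2 - q) <= (1/2 - p) + r) by (apply Rabs_def2 in Hqp; apply Rabs_le; lra).
  assert (7 * Rabs (1/2 - q) * r <= 7 * ((1/2 - p) + r) * r) by (apply Rmult_le_compat_r; lra).
  assert (hb_deriv p * r <= 25/6 * (1/2 - p) * r) by nra.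
  nra.
Qed.

(** * Concentration of Bernoulli frequencies *)

Fixpoint sum_below (n : nat) (f : nat -> R) : R :=
  match n with O => 0 | S n => sum_below n f + f n end.

Lemma sum_below_ext n f g : (forall k, (k < n)%nat -> f k = g k) -> sum_below n f = sum_below n g.
Proof.
  induction n as [|n IH]; intros H; simpl; [reflexivity|].
  f_equal; [apply IH; intros; apply H|apply H]; lia.
Qed.

Lemma sum_below_le n f g : (forall k, (k < n)%nat -> f k <= g k) -> sum_below n f <= sum_below n g.
Proof.
  induction n as [|n IH]; intros H; simpl; [lra|].
  apply Rplus_le_compat; [apply IH; intros; apply H|apply H]; lia.
Qed.

Lemma sum_below_const n c : sum_below n (fun _ => c) = INR n * c.
Proof. induction n as [|n IH]; cbn [sum_below]; [simpl; ring|]. rewrite IH, S_INR. ring. Qed.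

Lemma sum_below_plus n f g : sum_below n (fun k => f k + g k) = sum_below n f + sum_below n g.
Proof. induction n as [|n IH]; simpl; [ring|]. rewrite IH. ring. Qed.

Lemma sum_below_scal n c f : sum_below n (fun k => c * f k) = c * sum_below n f.
Proof. induction n as [|n IH]; simpl; [ring|]. rewrite IH. ring. Qed.

Lemma sum_below_nonneg n f : (forall k, (k < n)%nat -> 0 <= f k) -> 0 <= sum_below n f.
Proof.
  intros H. rewrite <- (Rmult_0_r (INR n)), <- sum_below_const. apply sum_below_le, H.
Qed.

Lemma sum_below_ge_term n f k : (forall k, (k < n)%nat -> 0 <= f k) -> (k < n)%nat ->
  f k <= sum_below n f.
Proof.
  induction n as [|n IH]; intros H Hk; [lia|]. simpl.
  destruct (Nat.eq_dec k n) as [->|Hne].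
  - pose proof (sum_below_nonneg n f (fun j Hj => H j ltac:(lia))). lra.
  - pose proof (IH (fun j Hj => H j ltac:(lia)) ltac:(lia)). pose proof (H n ltac:(lia)). lra.
Qed.

Fixpoint bern_expect (p : R) (L : nat) (f : list bool -> R) : R :=
  match L with
  | O => f []
  | S L => p * bern_expect p L (fun x => f (true :: x))
           + (1 - p) * bern_expect p L (fun x => f (false :: x))
  end.

Lemma bern_expect_ext p L f g : (forall x, f x = g x) -> bern_expect p L f = bern_expect p L g.
Proof.
  revert f g; induction L as [|L IH]; intros f g H; simpl; [apply H|].
  f_equal; f_equal; apply IH; intros; apply H.
Qed.

Lemma bern_expect_le p L f g : 0 <= p <= 1 -> (forall x, f x <= g x) ->
  bern_expect p L f <= bern_expect p L g.
Proof.
  revert f g; induction L as [|L IH]; intros f g Hp H; simpl; [apply H|].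
  pose proof (IH (fun x => f (true :: x)) (fun x => g (true :: x)) Hp (fun x => H _)).
  pose proof (IH (fun x => f (false :: x)) (fun x => g (false :: x)) Hp (fun x => H _)).
  apply Rplus_le_compat; apply Rmult_le_compat_l; lra.
Qed.

Lemma bern_expect_const p L c : bern_expect p L (fun _ => c) = c.
Proof. induction L as [|L IH]; simpl; [reflexivity|]. rewrite IH. ring. Qed.

Lemma bern_expect_plus p L f g :
  bern_expect p L (fun x => f x + g x) = bern_expect p L f + bern_expect p L g.
Proof.
  revert f g; induction L as [|L IH]; intros f g; simpl; [reflexivity|].
  rewrite (IH (fun x => f (true :: x))), (IH (fun x => f (false :: x))). ring.
Qed.

Lemma bern_expect_scal p L c f : bern_expect p L (fun x => c * f x) = c * bern_expect p L f.
Proof.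
  revert f; induction L as [|L IH]; intros f; simpl; [reflexivity|].
  rewrite (IH (fun x => f (true :: x))), (IH (fun x => f (false :: x))). ring.
Qed.

Lemma bern_expect_sum p L n (f : nat -> list bool -> R) :
  bern_expect p L (fun x => sum_below n (fun k => f k x))
  = sum_below n (fun k => bern_expect p L (f k)).
Proof.
  induction n as [|n IH]; simpl; [apply bern_expect_const|].
  rewrite bern_expect_plus, IH. reflexivity.
Qed.

Fixpoint prefix_ones (n : nat) (x : list bool) : nat :=
  match n, x with
  | O, _ | _, [] => O
  | S n, b :: x => ((if b then 1 else 0) + prefix_ones n x)%nat
  end.

Lemma prefix_ones_le n x : (prefix_ones n x <= n)%nat.
Proof.
  revert x; induction n as [|n IH]; intros [|b x]; simpl; try lia.
  specialize (IH x). destruct b; lia.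
Qed.

Lemma prefix_ones_S n x :
  prefix_ones (S n) x = (prefix_ones n x + if nth n x false then 1 else 0)%nat.
Proof.
  revert x; induction n as [|n IH]; intros [|b x]; try reflexivity.
  - destruct b; reflexivity.
  - change (prefix_ones (S (S n)) (b :: x)) with ((if b then 1 else 0) + prefix_ones (S n) x)%nat.
    rewrite IH. simpl. lia.
Qed.

Lemma bern_expect_exp_ones p L n mu : (n <= L)%nat ->
  bern_expect p L (fun x => exp (mu * INR (prefix_ones n x))) = (p * exp mu + (1 - p)) ^ n.
Proof.
  revert L; induction n as [|n IH]; intros L HL.
  - rewrite (bern_expect_ext _ _ _ (fun _ => 1)), bern_expect_const; [reflexivity|].
    intros [|b x]; simpl; rewrite Rmult_0_r; apply exp_0.
  - destruct L as [|L]; [lia|]. cbn [bern_expect].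
    rewrite (bern_expect_ext _ _ (fun x => exp (mu * INR (prefix_ones (S n) (true :: x))))
               (fun x => exp mu * exp (mu * INR (prefix_ones n x)))).
    2:{ intros x. rewrite <- exp_plus. f_equal. simpl prefix_ones. rewrite S_INR. ring. }
    simpl prefix_ones. rewrite bern_expect_scal, IH by lia. simpl. ring.
Qed.

Lemma exp_le_quadratic x : x <= 38/100 -> exp x <= 1 + x + x ^ 2.
Proof.
  intros Hx. destruct (Rle_dec x 0).
  - pose proof (exp_ineq1_le (- x)).
    assert (exp x * exp (- x) = 1) by (rewrite <- exp_plus, Rplus_opp_r; apply exp_0).
    pose proof (exp_pos x). nra.
  - (* [exp (x/2) <= 1 / (1 - x/2)], squared *)
    pose proof (exp_ineq1_le (- (x / 2))).
    assert (exp (x / 2) * exp (- (x / 2)) = 1) by (rewrite <- exp_plus, Rplus_opp_r; apply exp_0).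
    assert (Hsq : exp x = exp (x / 2) * exp (x / 2)) by (rewrite <- exp_plus; f_equal; field).
    pose proof (exp_pos (x / 2)).
    assert (Hhalf : exp (x / 2) * (1 - x / 2) <= 1) by nra.
    assert (exp x * ((1 - x / 2) * (1 - x / 2)) <= 1).
    { rewrite Hsq. assert (0 <= exp (x / 2) * (1 - x / 2)) by nra.
      replace (exp (x / 2) * exp (x / 2) * ((1 - x / 2) * (1 - x / 2)))
        with ((exp (x / 2) * (1 - x / 2)) * (exp (x / 2) * (1 - x / 2))) by ring.
      nra. }
    assert (0 <= x * x * (1 - 3 * x + x * x)) by (apply Rmult_le_pos; nra).
    nra.
Qed.

Lemma bern_mgf_le p mu : 0 <= p <= 1 -> mu * (1 - p) <= 38/100 -> - mu * p <= 38/100 ->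
  p * exp (mu * (1 - p)) + (1 - p) * exp (- mu * p) <= exp (mu ^ 2 / 4).
Proof.
  intros Hp H1 H2.
  pose proof (exp_le_quadratic _ H1). pose proof (exp_le_quadratic _ H2).
  pose proof (exp_ineq1_le (mu ^ 2 / 4)).
  assert (p * (1 - p) <= 1/4) by (pose proof (pow2_ge_0 (p - 1/2)); nra).
  assert (0 <= mu ^ 2 * (1/4 - p * (1 - p))) by (apply Rmult_le_pos; [apply pow2_ge_0|lra]).
  apply Rle_trans with (p * (1 + mu * (1 - p) + (mu * (1 - p)) ^ 2)
                        + (1 - p) * (1 + - mu * p + (- mu * p) ^ 2)).
  - apply Rplus_le_compat; apply Rmult_le_compat_l; lra.
  - nra.
Qed.

Lemma exp_INR_mult n a : exp (INR n * a) = exp a ^ n.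
Proof.
  induction n as [|n IH]; [simpl; rewrite Rmult_0_l; apply exp_0|].
  rewrite S_INR, <- tech_pow_Rmult, <- IH, <- exp_plus. f_equal. ring.
Qed.

Lemma bern_expect_exp_centered_le p L n mu : 0 <= p <= 1 ->
  mu * (1 - p) <= 38/100 -> - mu * p <= 38/100 -> (n <= L)%nat ->
  bern_expect p L (fun x => exp (mu * (INR (prefix_ones n x) - INR n * p)))
  <= exp (INR n * (mu ^ 2 / 4)).
Proof.
  intros Hp H1 H2 HL.
  rewrite (bern_expect_ext _ _ _
             (fun x => exp (INR n * (- mu * p)) * exp (mu * INR (prefix_ones n x)))).
  2:{ intros x. rewrite <- exp_plus. f_equal. ring. }
  rewrite bern_expect_scal, bern_expect_exp_ones, !exp_INR_mult, <- Rpow_mult_distr by exact HL.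
  apply pow_incr. split.
  - pose proof (exp_pos (- mu * p)). pose proof (exp_pos mu).
    apply Rmult_le_pos; nra.
  - eapply Rle_trans; [|apply (bern_mgf_le p mu); assumption].
    right. replace (mu * (1 - p)) with (mu + - mu * p) by ring. rewrite exp_plus. ring.
Qed.

Lemma bern_chernoff p L n mu c : 0 <= p <= 1 ->
  mu * (1 - p) <= 38/100 -> - mu * p <= 38/100 -> (n <= L)%nat ->
  bern_expect p L (fun x =>
    if Rle_dec (INR n * c) (mu * (INR (prefix_ones n x) - INR n * p)) then 1 else 0)
  <= exp (INR n * (mu ^ 2 / 4) - INR n * c).
Proof.
  intros Hp H1 H2 HL.
  apply Rle_trans with (bern_expect p L (fun x =>
    exp (- (INR n * c)) * exp (mu * (INR (prefix_ones n x) - INR n * p)))).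
  - apply bern_expect_le; [exact Hp|]. intros x. rewrite <- exp_plus.
    destruct (Rle_dec _ _).
    + eapply Rle_trans; [|apply exp_ineq1_le]. lra.
    + left. apply exp_pos.
  - rewrite bern_expect_scal, Rminus_def, Rplus_comm, exp_plus.
    apply Rmult_le_compat_l; [left; apply exp_pos|].
    apply bern_expect_exp_centered_le; assumption.
Qed.

Definition freq (n : nat) (x : list bool) : R := INR (prefix_ones n x) / INR n.

Lemma freq_range n x : (1 <= n)%nat -> 0 <= freq n x <= 1.
Proof.
  intros Hn. unfold freq. assert (0 < INR n) by (apply lt_0_INR; lia).
  pose proof (pos_INR (prefix_ones n x)). pose proof (le_INR _ _ (prefix_ones_le n x)).
  split; [apply Rdiv_le_0_compat; lra|].
  apply (Rmult_le_reg_r (INR n)); [lra|]. unfold Rdiv. rewrite Rmult_assoc, Rinv_l; lra.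
Qed.

Lemma bern_deviation_le p L n r : 2/5 <= p <= 3/5 -> 0 <= r <= 29/100 -> (1 <= n <= L)%nat ->
  bern_expect p L (fun x => if Rle_dec r (Rabs (freq n x - p)) then 1 else 0)
  <= 2 * exp (- (INR n * r ^ 2)).
Proof.
  intros Hp Hr Hn. assert (Hn0 : 0 < INR n) by (apply lt_0_INR; lia).
  (* one Chernoff bound with [mu = 2 r] for each tail *)
  set (tail s x := if Rle_dec (INR n * (2 * r ^ 2)) (s * (2 * r) * (INR (prefix_ones n x) - INR n * p))
                   then 1 else 0).
  apply Rle_trans with (bern_expect p L (fun x => tail 1 x + tail (-1) x)).
  - apply bern_expect_le; [lra|]. intros x. unfold tail.
    assert (Hc : INR (prefix_ones n x) - INR n * p = INR n * (freq n x - p))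
      by (unfold freq; field; lra).
    rewrite Hc.
    destruct (Rle_dec r _) as [Hle|]; [|destruct (Rle_dec _ _); destruct (Rle_dec _ _); lra].
    destruct (Rle_dec 0 (freq n x - p)).
    + rewrite Rabs_right in Hle by lra.
      destruct (Rle_dec _ (1 * _ * _)) as [|Hf]; [destruct (Rle_dec _ _); lra|].
      exfalso. apply Hf. assert (0 <= INR n * r * (freq n x - p - r)) by (apply Rmult_le_pos; nra).
      nra.
    + rewrite Rabs_left in Hle by lra.
      destruct (Rle_dec _ (-1 * _ * _)) as [|Hf]; [destruct (Rle_dec _ _); lra|].
      exfalso. apply Hf. assert (0 <= INR n * r * (- (freq n x - p) - r)) by (apply Rmult_le_pos; nra).
      nra.
  - rewrite bern_expect_plus. unfold tail.
    pose proof (bern_chernoff p L n (1 * (2 * r)) (2 * r ^ 2) ltac:(lra) ltac:(nra) ltac:(nra) ltac:(lia)).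
    pose proof (bern_chernoff p L n (-1 * (2 * r)) (2 * r ^ 2) ltac:(lra) ltac:(nra) ltac:(nra) ltac:(lia)).
    replace (INR n * ((1 * (2 * r)) ^ 2 / 4) - INR n * (2 * r ^ 2)) with (- (INR n * r ^ 2)) in * by field.
    replace (INR n * ((-1 * (2 * r)) ^ 2 / 4) - INR n * (2 * r ^ 2)) with (- (INR n * r ^ 2)) in * by field.
    lra.
Qed.

(** * Reward tables *)

(* The [k]-th play of arm [a] observes entry [k] of [table x1 x2 a]. *)
Definition table (x1 x2 : list bool) (a : arm) : list bool :=
  match a with A1 => x1 | A2 => x2 end.

Definition table_step (sel : history -> arm) (x1 x2 : list bool) (h : history) : arm * bool :=
  (sel h, nth (count_plays (sel h) h) (table x1 x2 (sel h)) false).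

Fixpoint table_run (sel : history -> arm) (x1 x2 : list bool) (h : history) (r : nat) : history :=
  match r with
  | O => h
  | S r => table_run sel x1 x2 (h ++ [table_step sel x1 x2 h]) r
  end.

Lemma arm_eqb_true a b : arm_eqb a b = true <-> a = b.
Proof. destruct a, b; simpl; split; congruence. Qed.

Lemma count_plays_app a a' b h :
  count_plays a (h ++ [(a', b)]) = (count_plays a h + if arm_eqb a' a then 1 else 0)%nat.
Proof.
  unfold count_plays. rewrite filter_app, length_app. simpl.
  destruct (arm_eqb a' a); simpl; lia.
Qed.

Lemma count_ones_app a a' b h :
  count_ones a (h ++ [(a', b)]) = (count_ones a h + if (arm_eqb a' a && b)%bool then 1 else 0)%nat.
Proof.
  unfold count_ones. rewrite filter_app, length_app. simpl.
  destruct (arm_eqb a' a && b)%bool; simpl; lia.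
Qed.

Lemma count_plays_le a h : (count_plays a h <= length h)%nat.
Proof.
  unfold count_plays. induction h as [|x h IH]; simpl; [lia|].
  destruct (arm_eqb _ _); simpl; lia.
Qed.

Lemma nth_count_plays_app a h pre b x :
  length pre = count_plays a h -> nth (count_plays a h) (pre ++ b :: x) false = b.
Proof. intros <-. rewrite app_nth2, Nat.sub_diag by lia. reflexivity. Qed.

(* Drawing the rewards in advance as i.i.d. tables does not change the law of the play
   counts; [pre1] and [pre2] are the table entries already consumed by [h]. *)
Lemma exp_plays_table p1 p2 sel i : forall r h pre1 pre2 L1 L2,
  length pre1 = count_plays A1 h -> length pre2 = count_plays A2 h ->
  (r <= L1)%nat -> (r <= L2)%nat ->
  exp_plays (param p1 p2) sel i h r + INR (count_plays i h) =
  bern_expect p1 L1 (fun x1 => bern_expect p2 L2 (fun x2 =>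
    INR (count_plays i (table_run sel (pre1 ++ x1) (pre2 ++ x2) h r)))).
Proof.
  induction r as [|r IH]; intros h pre1 pre2 L1 L2 H1 H2 HL1 HL2.
  - cbn. rewrite Rplus_0_l, !bern_expect_const. reflexivity.
  - assert (Hstep : forall b, INR (count_plays i (h ++ [(sel h, b)])) =
                              (if arm_eqb (sel h) i then 1 else 0) + INR (count_plays i h)).
    { intros b. rewrite count_plays_app, plus_INR. destruct (arm_eqb _ _); simpl; ring. }
    cbn [exp_plays]. destruct (sel h) eqn:Ha.
    + destruct L1 as [|L1]; [lia|]. cbn [bern_expect].
      assert (Hb : forall b, bern_expect p1 L1 (fun x1 => bern_expect p2 L2 (fun x2 =>
          INR (count_plays i (table_run sel (pre1 ++ b :: x1) (pre2 ++ x2) h (S r)))))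
        = exp_plays (param p1 p2) sel i (h ++ [(A1, b)]) r + INR (count_plays i (h ++ [(A1, b)]))).
      { intros b. rewrite (IH _ (pre1 ++ [b]) pre2 L1 L2)
          by (try rewrite length_app; try rewrite count_plays_app; simpl; lia).
        apply bern_expect_ext. intros x1. apply bern_expect_ext. intros x2.
        cbn [table_run]. unfold table_step. rewrite Ha. simpl table.
        rewrite nth_count_plays_app, <- app_assoc by exact H1. reflexivity. }
      rewrite !Hb, !Hstep. simpl param. ring.
    + destruct L2 as [|L2]; [lia|]. cbn [bern_expect].
      assert (Hb : forall b, bern_expect p1 L1 (fun x1 => bern_expect p2 L2 (fun x2 =>
          INR (count_plays i (table_run sel (pre1 ++ x1) (pre2 ++ b :: x2) h (S r)))))
        = exp_plays (param p1 p2) sel i (h ++ [(A2, b)]) r + INR (count_plays i (h ++ [(A2, b)]))).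
      { intros b. rewrite (IH _ pre1 (pre2 ++ [b]) L1 L2)
          by (try rewrite length_app; try rewrite count_plays_app; simpl; lia).
        apply bern_expect_ext. intros x1. apply bern_expect_ext. intros x2.
        cbn [table_run]. unfold table_step. rewrite Ha. simpl table.
        rewrite nth_count_plays_app, <- app_assoc by exact H2. reflexivity. }
      rewrite bern_expect_plus, !bern_expect_scal, !Hb, !Hstep. simpl param. ring.
Qed.

Lemma expected_N_table p1 p2 sel i t :
  expected_N (param p1 p2) sel i t =
  bern_expect p1 t (fun x1 => bern_expect p2 t (fun x2 =>
    INR (count_plays i (table_run sel x1 x2 [] t)))).
Proof.
  unfold expected_N. rewrite <- (Rplus_0_r (exp_plays _ _ _ _ _)).
  exact (exp_plays_table p1 p2 sel i t [] [] [] t t eq_refl eq_refl (le_n t) (le_n t)).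
Qed.

Definition prefix_index (alpha : R) (n : nat) (x : list bool) (s : nat) : R :=
  hb (freq n x) + ucd_ber_half (freq n x) (delta_alpha alpha s) n.

Definition index_lt_event (alpha c : R) (n : nat) (x : list bool) (s : nat) : R :=
  if Rlt_dec (prefix_index alpha n x s) c then 1 else 0.

Definition index_ge_event (alpha c : R) (u n : nat) (x : list bool) (s : nat) : R :=
  if le_dec u n then (if Rle_dec c (prefix_index alpha n x s) then 1 else 0) else 0.

Lemma index_lt_event_range alpha c n x s :
  0 <= index_lt_event alpha c n x s <= 1.
Proof. unfold index_lt_event. destruct (Rlt_dec _ _); lra. Qed.

Lemma index_ge_event_range alpha c u n x s :
  0 <= index_ge_event alpha c u n x s <= 1.
Proof. unfold index_ge_event. destruct (le_dec _ _); [destruct (Rle_dec _ _)|]; lra. Qed.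

Section TableRun.
Variables (sel : history -> arm) (x1 x2 : list bool).

Lemma table_run_S h r :
  table_run sel x1 x2 h (S r)
  = table_run sel x1 x2 h r ++ [table_step sel x1 x2 (table_run sel x1 x2 h r)].
Proof. revert h; induction r as [|r IH]; intros h; [reflexivity|]. apply IH. Qed.

Lemma length_table_run h r : length (table_run sel x1 x2 h r) = (length h + r)%nat.
Proof.
  revert h; induction r as [|r IH]; intros h; simpl; [lia|].
  rewrite IH, length_app. simpl. lia.
Qed.

Lemma count_ones_table_run a s :
  count_ones a (table_run sel x1 x2 [] s)
  = prefix_ones (count_plays a (table_run sel x1 x2 [] s)) (table x1 x2 a).
Proof.
  induction s as [|s IH]; [reflexivity|].
  rewrite table_run_S. unfold table_step.
  rewrite count_ones_app, count_plays_app, IH.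
  destruct (arm_eqb _ a) eqn:Ha; simpl andb.
  - apply arm_eqb_true in Ha. rewrite Ha, Nat.add_1_r, prefix_ones_S.
    destruct (nth _ _ _); reflexivity.
  - rewrite !Nat.add_0_r. reflexivity.
Qed.

Lemma ucb_index_table_run alpha a s :
  ucb_index alpha a (table_run sel x1 x2 [] s)
  = prefix_index alpha (count_plays a (table_run sel x1 x2 [] s)) (table x1 x2 a) (S s).
Proof.
  unfold ucb_index, prefix_index, phat, freq.
  rewrite count_ones_table_run, length_table_run. reflexivity.
Qed.

Variables (alpha c : R) (u : nat).

(* the bad events of round [j + 1], over all possible play counts [1 <= n <= j] *)
Definition bad_round (j : nat) : R :=
  sum_below j (fun n =>
    index_lt_event alpha c (S n) x1 (S j) + index_ge_event alpha c u (S n) x2 (S j)).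

Lemma bad_round_term_nonneg j n :
  0 <= index_lt_event alpha c (S n) x1 (S j) + index_ge_event alpha c u (S n) x2 (S j).
Proof.
  pose proof (index_lt_event_range alpha c (S n) x1 (S j)).
  pose proof (index_ge_event_range alpha c u (S n) x2 (S j)). lra.
Qed.

Lemma bad_round_nonneg j : 0 <= bad_round j.
Proof. apply sum_below_nonneg. intros n _. apply bad_round_term_nonneg. Qed.

Hypothesis ucb_sel : forall h, is_ucb_choice alpha h (sel h).
Hypothesis u_pos : (1 <= u)%nat.

Lemma bad_round_ge_1 j :
  sel (table_run sel x1 x2 [] j) = A2 -> (u <= count_plays A2 (table_run sel x1 x2 [] j))%nat ->
  1 <= bad_round j.
Proof.
  intros Hsel Hu.
  destruct (ucb_sel (table_run sel x1 x2 [] j)) as [Hzero|[Hpos Hle]];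
    rewrite Hsel in *; [lia|]. simpl other in *.
  rewrite !ucb_index_table_run in Hle. simpl table in Hle.
  pose proof (count_plays_le A1 (table_run sel x1 x2 [] j)).
  pose proof (count_plays_le A2 (table_run sel x1 x2 [] j)).
  rewrite length_table_run in *. simpl length in *.
  set (N1 := count_plays A1 (table_run sel x1 x2 [] j)) in *.
  set (N2 := count_plays A2 (table_run sel x1 x2 [] j)) in *.
  pose proof (fun n (_ : (n < j)%nat) => bad_round_term_nonneg j n) as Hterms.
  (* either arm 1 is underestimated, or arm 2 (with at least [u] plays) is overestimated *)
  destruct (Rlt_dec (prefix_index alpha N1 x1 (S j)) c) as [Hlt|Hge].
  - pose proof (sum_below_ge_term j _ (pred N1) Hterms ltac:(lia)) as Hterm.
    cbv beta in Hterm. rewrite Nat.succ_pred_pos in Hterm by lia.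
    assert (index_lt_event alpha c N1 x1 (S j) = 1).
    { unfold index_lt_event. destruct (Rlt_dec _ _); [reflexivity|contradiction]. }
    pose proof (index_ge_event_range alpha c u N1 x2 (S j)).
    unfold bad_round. lra.
  - pose proof (sum_below_ge_term j _ (pred N2) Hterms ltac:(lia)) as Hterm.
    cbv beta in Hterm. rewrite Nat.succ_pred_pos in Hterm by lia.
    assert (index_ge_event alpha c u N2 x2 (S j) = 1).
    { unfold index_ge_event. destruct (le_dec _ _); [|lia].
      destruct (Rle_dec _ _); [reflexivity|]. lra. }
    pose proof (index_lt_event_range alpha c N2 x1 (S j)).
    unfold bad_round. lra.
Qed.

Lemma count_plays_A2_le t :
  INR (count_plays A2 (table_run sel x1 x2 [] t)) <= INR u + sum_below t bad_round.
Proof.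
  (* every play of arm 2 beyond its [u]-th one happens in a bad round *)
  enough (H : INR (count_plays A2 (table_run sel x1 x2 [] t))
              <= INR (Nat.min (count_plays A2 (table_run sel x1 x2 [] t)) u) + sum_below t bad_round).
  { eapply Rle_trans; [exact H|]. apply Rplus_le_compat_r, le_INR. lia. }
  induction t as [|t IH]; [simpl; lra|].
  rewrite table_run_S. unfold table_step at 1 2. rewrite count_plays_app. cbn [sum_below].
  pose proof (bad_round_nonneg t).
  destruct (arm_eqb (sel (table_run sel x1 x2 [] t)) A2) eqn:Ha.
  - apply arm_eqb_true in Ha.
    destruct (le_lt_dec u (count_plays A2 (table_run sel x1 x2 [] t))) as [Hu|Hu].
    + pose proof (bad_round_ge_1 t Ha Hu).
      rewrite Nat.min_r, plus_INR in * by lia. simpl INR. lra.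
    + rewrite Nat.min_l in * by lia. rewrite !plus_INR in *. simpl INR. lra.
  - rewrite !Nat.add_0_r. lra.
Qed.

End TableRun.

Lemma Rpower_pos x y : 0 < Rpower x y.
Proof. apply exp_pos. Qed.

Lemma ln_4_div_delta_alpha alpha s : (1 <= s)%nat ->
  ln (4 / delta_alpha alpha s) = alpha * ln (INR s).
Proof.
  intros Hs. unfold delta_alpha.
  replace (4 / (4 * Rpower (INR s) (- alpha))) with (Rpower (INR s) alpha).
  - apply ln_Rpower.
  - rewrite Rpower_Ropp. pose proof (Rpower_pos (INR s) alpha). field. lra.
Qed.

Definition radius (alpha : R) (n s : nat) : R := sqrt (alpha * ln (INR s) / INR n).

Lemma INR_mult_radius_sqr alpha n s : 0 <= alpha -> (1 <= n)%nat -> (1 <= s)%nat ->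
  INR n * radius alpha n s ^ 2 = alpha * ln (INR s).
Proof.
  intros Ha Hn Hs. unfold radius.
  assert (0 < INR n) by (apply lt_0_INR; lia).
  assert (0 <= ln (INR s)) by (rewrite <- ln_1; apply ln_le; [lra|apply (le_INR 1); lia]).
  rewrite <- Rsqr_pow2, Rsqr_sqrt.
  - field. lra.
  - apply Rdiv_le_0_compat; [apply Rmult_le_pos|]; lra.
Qed.

Lemma prefix_index_eq alpha n x s : 0 <= alpha -> (1 <= n)%nat -> (1 <= s)%nat ->
  prefix_index alpha n x s = hb (freq n x) + ucb_bonus (freq n x) (radius alpha n s).
Proof.
  intros Ha Hn Hs. unfold prefix_index, ucd_ber_half, ucb_bonus.
  rewrite ln_4_div_delta_alpha by exact Hs.
  assert (0 < INR n) by (apply lt_0_INR; lia).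
  replace (9 * (alpha * ln (INR s)) / INR n)
    with (9 * (INR n * radius alpha n s ^ 2) / INR n) by (rewrite INR_mult_radius_sqr; auto).
  unfold radius. field. lra.
Qed.

Lemma bern_expect_deviation_event_le p L alpha n s (f : list bool -> R) :
  2/5 <= p <= 3/5 -> 0 <= alpha -> (1 <= n <= L)%nat -> (1 <= s)%nat ->
  radius alpha n s <= 29/100 ->
  (forall x, f x <= 1) -> (forall x, Rabs (freq n x - p) < radius alpha n s -> f x <= 0) ->
  bern_expect p L f <= 2 * Rpower (INR s) (- alpha).
Proof.
  intros Hp Ha Hn Hs Hr Hf1 Hf0.
  eapply Rle_trans; [apply bern_expect_le with
    (g := fun x => if Rle_dec (radius alpha n s) (Rabs (freq n x - p)) then 1 else 0); [lra|]|].
  - intros x. destruct (Rle_dec _ _); [apply Hf1|]. apply Hf0. lra.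
  - assert (0 <= radius alpha n s) by apply sqrt_pos.
    eapply Rle_trans; [apply bern_deviation_le; [lra|lra|lia]|].
    rewrite INR_mult_radius_sqr by (lra || lia). unfold Rpower. right. do 2 f_equal. ring.
Qed.

Lemma bern_expect_index_lt_le p L alpha n s : 2/5 <= p <= 1/2 -> 0 <= alpha ->
  (1 <= n <= L)%nat -> (1 <= s)%nat ->
  bern_expect p L (fun x => index_lt_event alpha (hb p) n x s) <= 2 * Rpower (INR s) (- alpha).
Proof.
  intros Hp Ha Hn Hs.
  assert (Hr0 : 0 <= radius alpha n s) by apply sqrt_pos.
  assert (Hopt : forall x, 3/4 <= 9 * radius alpha n s ^ 2 \/ Rabs (freq n x - p) < radius alpha n s ->
                   index_lt_event alpha (hb p) n x s = 0).
  { intros x Hdev. unfold index_lt_event. destruct (Rlt_dec _ _) as [Hlt|]; [|reflexivity].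
    rewrite prefix_index_eq in Hlt by (auto; lia).
    pose proof (hb_le_add_bonus p (freq n x) (radius alpha n s) Hp (freq_range n x ltac:(lia)) Hr0 Hdev).
    lra. }
  pose proof (Rpower_pos (INR s) (- alpha)).
  destruct (Rle_dec (3/4) (9 * radius alpha n s ^ 2)).
  - rewrite (bern_expect_ext _ _ _ (fun _ => 0)), bern_expect_const; [lra|].
    intros x. apply Hopt. left. assumption.
  - apply (bern_expect_deviation_event_le p L alpha n s); try lra; try lia.
    + nra.
    + intros x. apply index_lt_event_range.
    + intros x Hdev. rewrite Hopt; [lra|]. right. exact Hdev.
Qed.

Lemma bern_expect_index_ge_le p D L alpha u n s : 2/5 <= p < 1/2 -> 0 < D <= 3/4 -> 0 <= alpha ->
  (1 <= n <= L)%nat -> (1 <= s)%nat ->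
  (1/2 - p) ^ 2 * (alpha * ln (INR s)) <= INR n * D ^ 2 / 784 ->
  alpha * ln (INR s) <= INR n * D / 60 ->
  bern_expect p L (fun x => index_ge_event alpha (hb p + D) u n x s)
  <= 2 * Rpower (INR s) (- alpha).
Proof.
  intros Hp HD Ha Hn Hs H784 H60.
  assert (Hn0 : 0 < INR n) by (apply lt_0_INR; lia).
  pose proof (INR_mult_radius_sqr alpha n s Ha ltac:(lia) Hs) as Hnr.
  set (r := radius alpha n s) in *.
  assert (Hr0 : 0 <= r) by apply sqrt_pos.
  assert (Hr60 : r ^ 2 <= D / 60).
  { apply (Rmult_le_reg_l (INR n)); [lra|]. rewrite Hnr. lra. }
  assert (Hr28 : (1/2 - p) * r <= D / 28).
  { apply Rsqr_incr_0_var; [|lra]. unfold Rsqr.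
    apply (Rmult_le_reg_l (INR n)); [lra|].
    replace (INR n * ((1/2 - p) * r * ((1/2 - p) * r))) with ((1/2 - p) ^ 2 * (INR n * r ^ 2)) by ring.
    rewrite Hnr. lra. }
  apply (bern_expect_deviation_event_le p L alpha n s); try lra; try lia.
  - fold r. nra.
  - intros x. apply index_ge_event_range.
  - intros x Hdev. unfold index_ge_event. destruct (le_dec _ _); [|lra].
    destruct (Rle_dec _ _) as [Hle|]; [|lra].
    rewrite prefix_index_eq in Hle by (auto; lia). fold r in Hle.
    pose proof (hb_add_bonus_lt p D r (freq n x) Hp ltac:(lra) Hr0 Hr28 Hr60
                  (freq_range n x ltac:(lia)) Hdev).
    lra.
Qed.

(** * The regret bound *)

Lemma Rpower_antitone x y b : 0 < x <= y -> 0 <= b -> Rpower y (- b) <= Rpower x (- b).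
Proof.
  intros Hxy Hb. rewrite !Rpower_Ropp.
  apply Rinv_le_contravar; [apply Rpower_pos|]. apply Rle_Rpower_l; lra.
Qed.

(* [s (s+1)^-alpha <= (s+1)^(1-alpha) <= c^(1-alpha)], the slope of [x^(2-alpha)]
   at some [c] in [s, s+1] *)
Lemma mul_Rpower_succ_le alpha s : 2 < alpha -> 1 <= s ->
  s * Rpower (s + 1) (- alpha)
  <= (Rpower s (2 - alpha) - Rpower (s + 1) (2 - alpha)) / (alpha - 2).
Proof.
  intros Ha Hs.
  destruct (MVT_cor2 (fun x => Rpower x (2 - alpha)) (fun x => (2 - alpha) * Rpower x (2 - alpha - 1))
              s (s + 1)) as [c [Hc Hsc]]; [lra| |].
  { intros c Hc. apply derivable_pt_lim_power. lra. }
  replace (Rpower s (2 - alpha) - Rpower (s + 1) (2 - alpha))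
    with (- (Rpower (s + 1) (2 - alpha) - Rpower s (2 - alpha))) by ring.
  rewrite Hc. replace (2 - alpha - 1) with (- (alpha - 1)) by ring.
  replace (- ((2 - alpha) * Rpower c (- (alpha - 1)) * (s + 1 - s)) / (alpha - 2))
    with (Rpower c (- (alpha - 1))) by (field; lra).
  eapply Rle_trans; [|apply Rpower_antitone with (y := s + 1); lra].
  replace (- (alpha - 1)) with (1 + - alpha) by ring.
  rewrite Rpower_plus, Rpower_1 by lra.
  pose proof (Rpower_pos (s + 1) (- alpha)). nra.
Qed.

Lemma sum_mul_Rpower_succ_le alpha t : 2 < alpha ->
  sum_below t (fun j => INR j * Rpower (INR (S j)) (- alpha)) <= 1 / (alpha - 2).
Proof.
  intros Ha.
  assert (0 < 1 / (alpha - 2)) by (apply Rdiv_lt_0_compat; lra).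
  destruct t as [|t]; [simpl; lra|].
  enough (Htel : sum_below (S t) (fun j => INR j * Rpower (INR (S j)) (- alpha))
                 <= (1 - Rpower (INR (S t)) (2 - alpha)) / (alpha - 2)).
  { pose proof (Rpower_pos (INR (S t)) (2 - alpha)).
    eapply Rle_trans; [exact Htel|]. apply Rmult_le_compat_r; [|lra].
    left. apply Rinv_0_lt_compat. lra. }
  induction t as [|t IH].
  - simpl. unfold Rpower. rewrite ln_1, !Rmult_0_r, exp_0.
    replace ((1 - 1) / (alpha - 2)) with 0 by (field; lra). lra.
  - cbn [sum_below] in *.
    pose proof (mul_Rpower_succ_le alpha (INR (S t)) Ha ltac:(apply (le_INR 1); lia)).
    rewrite <- S_INR in *.
    replace ((1 - Rpower (INR (S (S t))) (2 - alpha)) / (alpha - 2))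
      with ((1 - Rpower (INR (S t)) (2 - alpha)) / (alpha - 2)
            + (Rpower (INR (S t)) (2 - alpha) - Rpower (INR (S (S t))) (2 - alpha)) / (alpha - 2))
      by (field; lra).
    lra.
Qed.

Lemma bern_expect2_add p1 p2 L1 L2 c (F G : list bool -> R) :
  bern_expect p1 L1 (fun x1 => bern_expect p2 L2 (fun x2 => c + F x1 + G x2))
  = c + bern_expect p1 L1 F + bern_expect p2 L2 G.
Proof.
  rewrite (bern_expect_ext p1 L1 _ (fun x1 => (c + F x1) + bern_expect p2 L2 G)).
  - rewrite (bern_expect_plus p1 L1 (fun x1 => c + F x1) (fun _ => bern_expect p2 L2 G)).
    rewrite (bern_expect_plus p1 L1 (fun _ => c) F), !bern_expect_const. reflexivity.
  - intros x1. rewrite (bern_expect_plus p2 L2 (fun _ => c + F x1) G), bern_expect_const.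
    reflexivity.
Qed.

Lemma bern_expect_double_sum_le p L alpha t (f : nat -> nat -> list bool -> R) : 2 < alpha ->
  (forall j n, (n < j < t)%nat -> bern_expect p L (f j n) <= 2 * Rpower (INR (S j)) (- alpha)) ->
  bern_expect p L (fun x => sum_below t (fun j => sum_below j (fun n => f j n x)))
  <= 2 / (alpha - 2).
Proof.
  intros Ha Hf. rewrite bern_expect_sum.
  apply Rle_trans with (sum_below t (fun j => 2 * (INR j * Rpower (INR (S j)) (- alpha)))).
  - apply sum_below_le. intros j Hj.
    rewrite bern_expect_sum, <- Rmult_assoc, (Rmult_comm 2), Rmult_assoc, <- sum_below_const.
    apply sum_below_le. intros n Hn. apply Hf. lia.
  - rewrite sum_below_scal. pose proof (sum_mul_Rpower_succ_le alpha t Ha). unfold Rdiv in *. lra.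
Qed.

Lemma expected_N_A2_le p1 p2 alpha sel t u :
  2/5 <= p2 -> p2 < p1 -> p1 <= 1/2 -> 2 < alpha ->
  (forall h, is_ucb_choice alpha h (sel h)) -> (1 <= u)%nat ->
  (1/2 - p2) ^ 2 * (alpha * ln (INR t)) <= INR u * (hb p1 - hb p2) ^ 2 / 784 ->
  alpha * ln (INR t) <= INR u * (hb p1 - hb p2) / 60 ->
  expected_N (param p1 p2) sel A2 t <= INR u + 4 / (alpha - 2).
Proof.
  intros Hp2 H21 Hp1 Ha Hsel Hu H784 H60.
  set (D := hb p1 - hb p2) in *.
  assert (HD : 0 < D <= 3/4).
  { pose proof (hb_lt_compat p2 p1 ltac:(lra) Hp1). pose proof (hb_le_ln2 p1 ltac:(lra)).
    pose proof ln2_le. pose proof (hb_nonneg p2 ltac:(lra)). unfold D. lra. }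
  set (under x1 := sum_below t (fun j => sum_below j (fun n =>
                     index_lt_event alpha (hb p1) (S n) x1 (S j)))).
  set (over x2 := sum_below t (fun j => sum_below j (fun n =>
                    index_ge_event alpha (hb p1) u (S n) x2 (S j)))).
  rewrite expected_N_table.
  apply Rle_trans with (bern_expect p1 t (fun x1 => bern_expect p2 t (fun x2 =>
                          INR u + under x1 + over x2))).
  { apply bern_expect_le; [lra|]. intros x1. apply bern_expect_le; [lra|]. intros x2.
    eapply Rle_trans; [exact (count_plays_A2_le sel x1 x2 alpha (hb p1) u Hsel Hu t)|].
    unfold bad_round, under, over. rewrite Rplus_assoc, <- sum_below_plus.
    right. f_equal. apply sum_below_ext. intros j _. apply sum_below_plus. }
  rewrite bern_expect2_add.
  assert (Hunder : bern_expect p1 t under <= 2 / (alpha - 2)).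
  { apply bern_expect_double_sum_le; [exact Ha|]. intros j n Hnj.
    apply bern_expect_index_lt_le; lra || lia. }
  assert (Hover : bern_expect p2 t over <= 2 / (alpha - 2)).
  { apply bern_expect_double_sum_le; [exact Ha|]. intros j n Hnj.
    pose proof (Rpower_pos (INR (S j)) (- alpha)).
    destruct (le_dec u (S n)) as [Hun|Hun].
    - assert (Hln : alpha * ln (INR (S j)) <= alpha * ln (INR t)).
      { apply Rmult_le_compat_l; [lra|]. apply ln_le; apply lt_0_INR || apply le_INR; lia. }
      assert (HuS : INR u <= INR (S n)) by (apply le_INR; exact Hun).
      replace (hb p1) with (hb p2 + D) by (unfold D; ring).
      apply bern_expect_index_ge_le; try lra; try lia.
      + pose proof (pow2_ge_0 (1/2 - p2)). pose proof (pow2_ge_0 D). nra.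
      + nra.
    - rewrite (bern_expect_ext _ _ _ (fun _ => 0)), bern_expect_const; [lra|].
      intros x. unfold index_ge_event. destruct (le_dec _ _); [contradiction|reflexivity]. }
  unfold Rdiv in *. lra.
Qed.

Lemma regret_param p1 p2 sel t : hb p2 < hb p1 ->
  regret (param p1 p2) sel t = expected_N (param p1 p2) sel A2 t * (hb p1 - hb p2).
Proof.
  intros H. unfold regret, gap, entropy. simpl param. rewrite Rmax_left by lra.
  destruct (Rlt_dec 0 (hb p1 - hb p1)); [lra|].
  destruct (Rlt_dec 0 (hb p1 - hb p2)); [ring|lra].
Qed.

Lemma exists_nat_between x : 0 <= x -> exists n : nat, x <= INR n <= x + 1.
Proof.
  intros Hx. destruct (archimed x) as [Hup1 Hup2].
  exists (Z.to_nat (up x)). rewrite INR_IZR_INZ, Z2Nat.id by (apply le_IZR; lra). lra.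
Qed.

Lemma expected_N_A2_le_log p1 p2 alpha sel t :
  2/5 <= p2 -> p2 < p1 -> p1 <= 1/2 -> 2 < alpha ->
  (forall h, is_ucb_choice alpha h (sel h)) -> (2 <= t)%nat ->
  expected_N (param p1 p2) sel A2 t
  <= 784 * (1/2 - p2) ^ 2 * (alpha * ln (INR t)) / (hb p1 - hb p2) ^ 2
     + 60 * (alpha * ln (INR t)) / (hb p1 - hb p2) + 1 + 4 / (alpha - 2).
Proof.
  intros Hp2 H21 Hp1 Ha Hsel Ht.
  set (D := hb p1 - hb p2).
  assert (HD : 0 < D) by (pose proof (hb_lt_compat p2 p1 ltac:(lra) Hp1); unfold D; lra).
  set (L := alpha * ln (INR t)).
  assert (HL : 0 < L).
  { apply Rmult_lt_0_compat; [lra|]. rewrite <- ln_1.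
    apply ln_increasing; [lra|]. apply (lt_INR 1). lia. }
  set (U1 := 784 * (1/2 - p2) ^ 2 * L / D ^ 2). set (U2 := 60 * L / D).
  assert (HU1 : 0 <= U1) by (apply Rdiv_le_0_compat; [pose proof (pow2_ge_0 (1/2 - p2)); nra|nra]).
  assert (HU2 : 0 < U2) by (apply Rdiv_lt_0_compat; lra).
  destruct (exists_nat_between (U1 + U2)) as [u Hu]; [lra|].
  assert (Hu1 : (1 <= u)%nat) by (destruct u; [simpl in Hu; lra|lia]).
  eapply Rle_trans; [apply (expected_N_A2_le p1 p2 alpha sel t u)|lra]; try lra; try assumption.
  - fold D L. apply (Rmult_le_reg_r (/ D ^ 2)); [apply Rinv_0_lt_compat; nra|].
    replace (INR u * D ^ 2 / 784 * / D ^ 2) with (INR u / 784) by (field; lra).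
    unfold U1, Rdiv in *. lra.
  - fold D L. apply (Rmult_le_reg_r (/ D)); [apply Rinv_0_lt_compat; nra|].
    replace (INR u * D / 60 * / D) with (INR u / 60) by (field; lra).
    unfold U2, Rdiv in *. lra.
Qed.

Theorem theorem4 (p1 p2 alpha : R) (sel : history -> arm) (t : nat) :
  2/5 <= p1 <= 1/2 -> 2/5 <= p2 <= 1/2 -> p2 < p1 -> p1 < 1/2 ->
  2 < alpha ->
  (forall h : history, is_ucb_choice alpha h (sel h)) ->
  (2 <= t)%nat ->
  regret (param p1 p2) sel t <=
    784 * (1/2 - p2) ^ 2 * alpha * ln (INR t) / (hb p1 - hb p2)
    + 60 * alpha * ln (INR t)
    + 8 * (alpha - 1) / (alpha - 2) * (hb p1 - hb p2).
Proof.
  intros Hp1 Hp2 H21 Hp1h Ha Hsel Ht.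
  pose proof (hb_lt_compat p2 p1 ltac:(lra) ltac:(lra)) as Hhb.
  pose proof (expected_N_A2_le_log p1 p2 alpha sel t ltac:(lra) H21 ltac:(lra) Ha Hsel Ht) as HN.
  rewrite regret_param by exact Hhb.
  set (D := hb p1 - hb p2) in *. assert (HD : 0 < D) by (unfold D; lra).
  assert (Hconst : 1 + 4 / (alpha - 2) <= 8 * (alpha - 1) / (alpha - 2)).
  { replace (1 + 4 / (alpha - 2)) with ((alpha + 2) / (alpha - 2)) by (field; lra).
    apply Rmult_le_compat_r; [left; apply Rinv_0_lt_compat|]; lra. }
  eapply Rle_trans; [apply Rmult_le_compat_r; [lra|exact HN]|].
  replace ((784 * (1/2 - p2) ^ 2 * (alpha * ln (INR t)) / D ^ 2 + 60 * (alpha * ln (INR t)) / D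
            + 1 + 4 / (alpha - 2)) * D)
    with (784 * (1/2 - p2) ^ 2 * alpha * ln (INR t) / D + 60 * alpha * ln (INR t)
          + (1 + 4 / (alpha - 2)) * D) by (field; lra).
  apply Rplus_le_compat_l, Rmult_le_compat_r; lra.
Qed.
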